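(* Let $k$ be a field, $A,B$ abelian groups, $R$ an $A$-graded and $S$ a $B$-graded finite-dimensional Frobenius $k$-algebra with forms $\langle-,-\rangle_R,\langle-,-\rangle_S$, and $t:A\otimes B\to k^\times$ a bicharacter. Suppose there exist $\sigma_R\in A$, $\sigma_S\in B$ such that for homogeneous $r,r'\in R$, $\langle r,r'\rangle_R\neq0$ implies $|r|+|r'|+\sigma_R=0$, and for homogeneous $s,s'\in S$, $\langle s,s'\rangle_S\ne0$ implies $|s|+|s'|+\sigma_S=0$. Suppose further that the Nakayama automorphisms of $R$ and $S$ are diagonalisable. Then the Nakayama automorphism of $R\otimes^tS$, with respect to the form $\langle r\otimes s,r'\otimes s'\rangle=t(|r'|,|s|)\langle r,r'\rangle_R\langle s,s'\rangle_S$, is diagonalisable.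
   Context: $R\otimes^tS$ is $R\otimes S$ with product $(r\otimes s)(r'\otimes s')=t(|r'|,|s|)rr'\otimes ss'$ for homogeneous elements; $|\cdot|$ denotes degree. The Nakayama automorphism $\nu$ of a Frobenius algebra is defined by $\langle x,y\rangle=\langle y,\nu(x)\rangle$ for all $y$. *)

From HB Require Import structures.
From mathcomp Require Import all_boot all_order all_algebra falgebra.
Set Implicit Arguments. Unset Strict Implicit. Unset Printing Implicit Defensive.
Import GRing.Theory.
Local Open Scope ring_scope.

Definition graded_alg (k : fieldType) (A : zmodType) (R : falgType k)
    (G : A -> {vspace R}) : Prop :=
  [/\ (1 : R) \in G 0,
      (forall a b (x y : R), x \in G a -> y \in G b -> x * y \in G (a + b)),
      (forall (s : seq A) (v : A -> R), uniq s -> (forall a, v a \in G a) ->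
         \sum_(a <- s) v a = 0 -> forall a, a \in s -> v a = 0) &
      (exists s : seq A, (\sum_(a <- s) G a)%VS = fullv)].

Definition bilinear_form (k : fieldType) (V : vectType k) (F : V -> V -> k) :=
  (forall c x x' y, F (c *: x + x') y = c * F x y + F x' y) /\
  (forall c x y y', F x (c *: y + y') = c * F x y + F x y').

Definition nondegenerate (k : fieldType) (V : vectType k) (F : V -> V -> k) :=
  (forall x, (forall y, F x y = 0) -> x = 0) /\
  (forall y, (forall x, F x y = 0) -> y = 0).

Definition frobenius_form (k : fieldType) (R : falgType k) (F : R -> R -> k) :=
  [/\ bilinear_form F, nondegenerate F & forall x y z : R, F (x * y) z = F x (y * z)].

Definition nakayama (k : fieldType) (V : vectType k) (F : V -> V -> k)
    (nu : 'End(V)) := forall x y, F x y = F y (nu x).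

Definition diagonalisable (k : fieldType) (V : vectType k) (f : 'End(V)) :=
  exists X : seq V, basis_of fullv%VS X /\
    forall x, x \in X -> exists c : k, f x = c *: x.

Definition bicharacter (k : fieldType) (A B : zmodType) (t : A -> B -> k) :=
  [/\ forall a b, t a b != 0,
      forall a a' b, t (a + a') b = t a b * t a' b &
      forall a b b', t a (b + b') = t a b * t a b'].

(* Concrete model of R (x) S: coordinate matrices with respect to the fixed
   bases vbasis {:R}, vbasis {:S};  r (x) s := (r_i * s_j)_{i,j}. *)
Definition tensorT (k : fieldType) (R S : vectType k) :=
  'M[k]_(\dim {:R}%VS, \dim {:S}%VS).
Definition tens (k : fieldType) (R S : vectType k) (r : R) (s : S)
  : tensorT R S :=
  \matrix_(i, j) (coord (vbasis {:R}%VS) i r * coord (vbasis {:S}%VS) j s).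

(* The Frobenius form of R pairs the degree a part only with the degree
   -(a + sigR) part, so the Nakayama automorphism of R preserves degrees and the
   homogeneous components of an eigenvector are eigenvectors with the same
   eigenvalue: R, and likewise S, is spanned by homogeneous eigenvectors.  For
   x of degree a with nu_R x = l x and y of degree b with nu_S y = m y,
   comparing twists on homogeneous tensors gives
   <x ⊗ y, w> = <w, c (x ⊗ y)> with c = l m t(a, sigS) / t(sigR, b).
   The twisted form is nondegenerate, since on a homogeneous left tensor it is
   a nonzero multiple of the product of the two forms.  Hence the map scaling a
   basis of such tensors x ⊗ y by their constants c is a Nakayama automorphism,
   and every Nakayama automorphism must agree with it. *)

From mathcomp Require Import all_boot all_order all_algebra falgebra.
From mathcomp Require Import ring.
Set Implicit Arguments. Unset Strict Implicit. Unset Printing Implicit Defensive.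
Import GRing.Theory.
Local Open Scope ring_scope.

Lemma seq_choice (T : eqType) (C : Type) (c0 : C) (P : T -> C -> Prop) (s : seq T) :
  (forall x, x \in s -> exists c, P x c) ->
  exists f : T -> C, forall x, x \in s -> P x (f x).
Proof.
elim: s => [|x s IHs] hs; first by exists (fun=> c0).
have [c Pxc] := hs x (mem_head x s).
have [f Pf] : exists f : T -> C, forall y, y \in s -> P y (f y).
  by apply: IHs => y ys; apply: hs; rewrite inE ys orbT.
exists (fun y => if y == x then c else f y) => y; rewrite inE.
by case: eqP => [-> | _ /Pf].
Qed.

Section LinearAlgebra.
Variables (k : fieldType) (V : vectType k).
Implicit Types (X Y : seq V) (f g : V -> k).

Lemma span_ind X (P : V -> Prop) : (<<X>> = fullv)%VS ->
  P 0 -> (forall c u v, P u -> P v -> P (c *: u + v)) ->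
  (forall x, x \in X -> P x) -> forall v, P v.
Proof.
move=> sX P0 PD PX v; have: v \in <<in_tuple X>>%VS by rewrite sX memvf.
move/coord_span->; elim/big_ind: _ => // [u w Pu Pw | i _].
  by rewrite -[u]scale1r; apply: PD.
by rewrite -[_ *: _]addr0; apply: PD => //; apply/PX/mem_nth.
Qed.

Lemma scalar_eq_span X f g : (<<X>> = fullv)%VS -> scalar f -> scalar g ->
  {in X, f =1 g} -> f =1 g.
Proof.
move=> sX lf lg eq_fg; apply: span_ind sX _ _ eq_fg => [|c u v fgu fgv].
  by rewrite -(subrr 0) (zmod_morphism_linear lf) (zmod_morphism_linear lg) !subrr.
by rewrite lf lg fgu fgv.
Qed.

Lemma free_subset_span X :
  exists Y, [/\ {subset Y <= X}, free Y & (<<Y>> = <<X>>)%VS].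
Proof.
elim: X => [|x X [Y [sYX fY eYX]]]; first by exists [::]; rewrite nil_free.
have subYxX : {subset Y <= x :: X} by move=> y /sYX yX; rewrite inE yX orbT.
have [xY | xNY] := boolP (x \in <<Y>>%VS).
  exists Y; split=> //; rewrite span_cons -eYX.
  by apply/esym/addv_idPr; rewrite -memvE.
exists (x :: Y); split; last by rewrite !span_cons eYX.
  by move=> y; rewrite inE => /predU1P[->|/subYxX]; rewrite ?mem_head.
by rewrite free_cons xNY.
Qed.

Lemma exists_pred_span (P : V -> Prop) X :
  (forall x, x \in X -> exists2 L, (forall y, y \in L -> P y) & x \in <<L>>%VS) ->
  exists2 L, (forall y, y \in L -> P y) & (<<X>> <= <<L>>)%VS.
Proof.
elim: X => [|x X IHX] hX; first by exists [::].
have [Lx PLx xLx] := hX x (mem_head x X).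
have [L PL sXL] : exists2 L, (forall y, y \in L -> P y) & (<<X>> <= <<L>>)%VS.
  by apply: IHX => y yX; apply: hX; rewrite inE yX orbT.
exists (Lx ++ L); first by move=> y; rewrite mem_cat => /orP[/PLx | /PL].
by rewrite span_cons span_cat addvS // -memvE.
Qed.

End LinearAlgebra.

Section BilinearForm.
Variables (k : fieldType) (V : vectType k) (F : V -> V -> k).
Hypothesis bF : bilinear_form F.

Lemma bilinDl u v y : F (u + v) y = F u y + F v y.
Proof. by have := bF.1 1 u v y; rewrite scale1r mul1r. Qed.

Lemma bilinDr x u v : F x (u + v) = F x u + F x v.
Proof. by have := bF.2 1 x u v; rewrite scale1r mul1r. Qed.

Lemma bilin0l y : F 0 y = 0.
Proof. by apply: (addrI (F 0 y)); rewrite -bilinDl !addr0. Qed.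

Lemma bilin0r x : F x 0 = 0.
Proof. by apply: (addrI (F x 0)); rewrite -bilinDr !addr0. Qed.

Lemma bilinZr c x y : F x (c *: y) = c * F x y.
Proof. by have := bF.2 c x y 0; rewrite !addr0 bilin0r addr0. Qed.

Lemma bilinBr x y y' : F x (y - y') = F x y - F x y'.
Proof. by rewrite bilinDr -scaleN1r bilinZr mulN1r. Qed.

Lemma bilin_suml I (r : seq I) (u : I -> V) y :
  F (\sum_(i <- r) u i) y = \sum_(i <- r) F (u i) y.
Proof. exact: (big_morph (F^~ y) (fun u v => bilinDl u v y) (bilin0l y)). Qed.

Lemma bilin_sumr I (r : seq I) (u : I -> V) x :
  F x (\sum_(i <- r) u i) = \sum_(i <- r) F x (u i).
Proof. exact: (big_morph (F x) (bilinDr x) (bilin0r x)). Qed.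

End BilinearForm.

Section Bicharacter.
Variables (k : fieldType) (A B : zmodType) (t : A -> B -> k).
Hypothesis bt : bicharacter t.

Lemma bichar_neq0 a b : t a b != 0.
Proof. by case: bt. Qed.

Lemma bicharDl a a' b : t (a + a') b = t a b * t a' b.
Proof. by case: bt. Qed.

Lemma bicharDr a b b' : t a (b + b') = t a b * t a b'.
Proof. by case: bt. Qed.

Lemma bicharNl a b : t (- a) b = (t a b)^-1.
Proof.
apply: (mulIf (bichar_neq0 a b)); rewrite -bicharDl addNr mulVf ?bichar_neq0 //.
by apply: (mulIf (bichar_neq0 0 b)); rewrite -bicharDl !addr0 mul1r.
Qed.

Lemma bicharNr a b : t a (- b) = (t a b)^-1.
Proof.
apply: (mulIf (bichar_neq0 a b)); rewrite -bicharDr addNr mulVf ?bichar_neq0 //.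
by apply: (mulIf (bichar_neq0 a 0)); rewrite -bicharDr !addr0 mul1r.
Qed.

End Bicharacter.

Lemma dual_degree (A : zmodType) (a a' sig : A) : a + a' + sig = 0 -> a' = - (a + sig).
Proof. by move/eqP; rewrite addrAC addrC addr_eq0 => /eqP. Qed.

Section Tensor.
Variables (k : fieldType) (R S : vectType k).

Lemma tens_linearl (s : S) : linear (fun r : R => tens r s).
Proof. by move=> c r r'; apply/matrixP => i j; rewrite !mxE linearP mulrDl mulrA. Qed.

Lemma tens_linearr (r : R) : linear (@tens k R S r).
Proof. by move=> c s s'; apply/matrixP => i j; rewrite !mxE linearP mulrDr mulrCA. Qed.

Lemma tens0l (s : S) : tens (0 : R) s = 0.
Proof. by apply/matrixP => i j; rewrite !mxE linear0 mul0r. Qed.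

Lemma tens0r (r : R) : tens r (0 : S) = 0.
Proof. by apply/matrixP => i j; rewrite !mxE linear0 mulr0. Qed.

Lemma tens_decomp (z : tensorT R S) :
  z = \sum_(i < \dim {:R}) tens (vbasis {:R})`_i (\sum_j z i j *: (vbasis {:S})`_j).
Proof.
have freeR := basis_free (vbasisP {:R}); have freeS := basis_free (vbasisP {:S}).
apply/matrixP => i j; rewrite summxE.
under eq_bigr => i' _ do rewrite !mxE coord_free // coord_sum_free //.
rewrite (bigD1 i) //= eqxx mul1r big1 ?addr0 // => i' ne_i'i.
by rewrite (negPf ne_i'i) mul0r.
Qed.

Lemma tens_span (X : seq R) (Y : seq S) :
  (<<X>> = fullv)%VS -> (<<Y>> = fullv)%VS ->
  (<<[seq tens x y | x <- X, y <- Y]>> = fullv)%VS.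
Proof.
set T := [seq tens x y | x <- X, y <- Y] => sX sY.
have tensT r s : tens r s \in <<T>>%VS.
  move: r s; apply: (span_ind sX) => [s | c r r' Tr Tr' s | x xX s].
  - by rewrite tens0l mem0v.
  - by rewrite tens_linearl memvD ?memvZ.
  move: s; apply: (span_ind sY) => [|c s s' Ts Ts' | y yY].
  - by rewrite tens0r mem0v.
  - by rewrite tens_linearr memvD ?memvZ.
  by rewrite memv_span ?allpairs_f.
apply/eqP; rewrite eqEsubv subvf; apply/subvP => z _.
by rewrite [z]tens_decomp memv_suml.
Qed.

End Tensor.

Section GradedDecomposition.
Variables (k : fieldType) (A : zmodType) (R : falgType k) (G : A -> {vspace R}).

Lemma mem_sumv_decomp (s : seq A) v : uniq s -> v \in (\sum_(a <- s) G a)%VS ->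
  exists2 w : A -> R, forall a, w a \in G a & v = \sum_(a <- s) w a.
Proof.
elim: s v => [|a s IHs] v.
  by rewrite big_nil memv0 => _ /eqP->; exists (fun=> 0) => [a|]; rewrite ?mem0v ?big_nil.
case/andP=> aNs us; rewrite big_cons => /memv_addP[u Gu [v' /(IHs _ us)[w Gw ->] ->]].
exists (fun b => if b == a then u else w b) => [b | ].
  by case: eqP => [-> | _].
rewrite big_cons eqxx; congr (_ + _); apply: eq_big_seq => b bs.
by case: eqP => // eq_ba; rewrite -eq_ba bs in aNs.
Qed.

Lemma graded_decomp : graded_alg G -> exists2 s : seq A, uniq s &
  forall v, exists2 w : A -> R, forall a, w a \in G a & v = \sum_(a <- s) w a.
Proof.
case=> _ _ _ [s sG]; exists (undup s) => [|v]; first exact: undup_uniq.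
apply: mem_sumv_decomp; rewrite ?undup_uniq // big_undup; last exact: addvv.
by rewrite sG memvf.
Qed.

End GradedDecomposition.

Section GradedFrobenius.
Variables (k : fieldType) (A : zmodType) (R : falgType k) (G : A -> {vspace R})
  (FR : R -> R -> k) (sig : A) (nu : 'End(R)).
Hypotheses (gG : graded_alg G) (fF : frobenius_form FR)
  (degF : forall a a' (r r' : R), r \in G a -> r' \in G a' ->
     FR r r' != 0 -> a + a' + sig = 0)
  (nF : nakayama FR nu).
Variable s : seq A.
Hypotheses (us : uniq s)
  (decomp : forall v, exists2 w : A -> R, forall a, w a \in G a & v = \sum_(a <- s) w a).

Let bF : bilinear_form FR. Proof. by case: fF. Qed.

Lemma form_homog_sumr d e (y : R) (w : A -> R) :
  y \in G d -> (forall a, w a \in G a) -> e \in s -> d + e + sig = 0 ->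
  FR y (\sum_(a <- s) w a) = FR y (w e).
Proof.
move=> yd Gw es de; rewrite bilin_sumr // (bigD1_seq e) //= big1 ?addr0 // => e' ne_e'e.
apply/eqP; apply: contraR ne_e'e => /(degF yd (Gw e')) de'.
by rewrite (dual_degree de) (dual_degree de').
Qed.

Lemma nakayama_homog a x : x \in G a -> nu x \in G a.
Proof.
move=> xa; have [w Gw nux] := decomp (nu x).
suff w0 e : e \in s -> e != a -> w e = 0.
  rewrite nux big_seq; apply: memv_suml => e es.
  by have [-> | ne_ea] := eqVneq e a; rewrite ?Gw // w0 ?mem0v.
move=> es ne_ea; case: fF => _ [_ ndR] _; apply: ndR => y.
have [yd Gyd ->] := decomp y; rewrite bilin_suml //; apply: big1 => d _.
apply/eqP; apply: contraR ne_ea => /[dup] nz /(degF (Gyd d) (Gw e)) de.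
have : FR x (yd d) != 0 by rewrite nF nux (form_homog_sumr (Gyd d) Gw es de).
by move=> /(degF xa (Gyd d)); rewrite (addrC a) => /dual_degree->; rewrite (dual_degree de).
Qed.

Lemma nakayama_eigen_homog l x (w : A -> R) :
  nu x = l *: x -> (forall a, w a \in G a) -> x = \sum_(a <- s) w a ->
  forall a, a \in s -> nu (w a) = l *: w a.
Proof.
move=> nux Gw xw a sa; apply/eqP; rewrite -subr_eq0; apply/eqP.
case: gG => _ _ direct _; apply: (direct s (fun b => nu (w b) - l *: w b)) => //.
  by move=> b; rewrite memvB ?memvZ ?nakayama_homog.
by move: nux; rewrite {1}xw linear_sum sumrB -scaler_sumr -xw => ->; rewrite subrr.
Qed.

End GradedFrobenius.

Lemma homog_eigen_span (k : fieldType) (A : zmodType) (R : falgType k)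
  (G : A -> {vspace R}) (FR : R -> R -> k) (sig : A) (nu : 'End(R)) :
  graded_alg G -> frobenius_form FR ->
  (forall a a' (r r' : R), r \in G a -> r' \in G a' ->
     FR r r' != 0 -> a + a' + sig = 0) ->
  nakayama FR nu -> diagonalisable nu ->
  exists2 X : seq R, (<<X>> = fullv)%VS &
     forall x, x \in X -> exists a l, x \in G a /\ nu x = l *: x.
Proof.
move=> gG fF degF nF [X [/andP[/eqP sX _] eigX]].
have [s us decomp] := graded_decomp gG.
have [L eigL sXL] : exists2 L, (forall y, y \in L -> exists a l, y \in G a /\ nu y = l *: y)
    & (<<X>> <= <<L>>)%VS.
  apply: exists_pred_span => x /eigX[l nux].
  have [w Gw xw] := decomp x; exists [seq w a | a <- s].
    move=> _ /mapP[a sa ->]; exists a, l; split=> //.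
    exact: (nakayama_eigen_homog gG fF degF nF us decomp nux Gw xw).
  by rewrite xw big_seq; apply: memv_suml => a sa; rewrite memv_span ?map_f.
by exists L => //; apply/eqP; rewrite eqEsubv subvf -sX.
Qed.

Section TwistedTensorForm.
Variables (k : fieldType) (A B : zmodType) (R S : falgType k)
  (GR : A -> {vspace R}) (GS : B -> {vspace S})
  (FR : R -> R -> k) (FS : S -> S -> k) (t : A -> B -> k) (sigR : A) (sigS : B).
Hypotheses (fR : frobenius_form FR) (fS : frobenius_form FS) (bt : bicharacter t)
  (degR : forall a a' (r r' : R), r \in GR a -> r' \in GR a' ->
     FR r r' != 0 -> a + a' + sigR = 0)
  (degS : forall b b' (s s' : S), s \in GS b -> s' \in GS b' ->
     FS s s' != 0 -> b + b' + sigS = 0).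
Variable F : tensorT R S -> tensorT R S -> k.
Hypotheses (bF : bilinear_form F)
  (Ftens : forall a a' b b' (r r' : R) (s s' : S),
     r \in GR a -> r' \in GR a' -> s \in GS b -> s' \in GS b' ->
     F (tens r s) (tens r' s') = t a' b * FR r r' * FS s s').
Variables (XR : seq R) (XS : seq S).
Hypotheses (sXR : (<<XR>> = fullv)%VS) (homXR : forall x, x \in XR -> exists a, x \in GR a)
  (sXS : (<<XS>> = fullv)%VS) (homXS : forall y, y \in XS -> exists b, y \in GS b).

Let bFR : bilinear_form FR. Proof. by case: fR. Qed.
Let bFS : bilinear_form FS. Proof. by case: fS. Qed.

(* A nonzero pairing FR r r' forces |r'| = -(|r| + sigR), so the twist
   t(|r'|, |s|) only depends on the left factors and the right ones may be
   arbitrary. *)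
Lemma tens_form_homogl a b (r r' : R) (s s' : S) : r \in GR a -> s \in GS b ->
  F (tens r s) (tens r' s') = t (- (a + sigR)) b * FR r r' * FS s s'.
Proof.
move=> ra sb; set c := t _ b.
have F_XR x' : x' \in XR -> forall s',
    F (tens r s) (tens x' s') = c * FR r x' * FS s s'.
  move=> /homXR[a' x'a']; apply: (scalar_eq_span sXS) => [c1 u v|c1 u v|y' /homXS[b' y'b']].
  - by rewrite /= tens_linearr bF.2.
  - by rewrite bFS.2; ring.
  rewrite (Ftens ra x'a' sb y'b').
  have [->|/(degR ra x'a')/dual_degree-> //] := eqVneq (FR r x') 0.
  by rewrite !(mulr0, mul0r).
move: r'; apply: (scalar_eq_span sXR) => [c1 u v|c1 u v|x' x'X]; last exact: F_XR.
- by rewrite /= tens_linearl bF.2.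
- by rewrite bFR.2; ring.
Qed.

Lemma tens_nakayama_eigen (nuR : 'End(R)) (nuS : 'End(S)) a b l m (x : R) (y : S) :
  nakayama FR nuR -> nakayama FS nuS ->
  x \in GR a -> nuR x = l *: x -> y \in GS b -> nuS y = m *: y ->
  forall w, F (tens x y) w = F w ((l * m * t a sigS / t sigR b) *: tens x y).
Proof.
move=> nR nS xa nux yb nuy.
apply: (scalar_eq_span (tens_span sXR sXS)) => [c u v|c u v|].
- exact: bF.2.
- exact: bF.1.
move=> _ /allpairsP[[x' y'] /= [/homXR[a' x'a'] /homXS[b' y'b'] ->]].
rewrite bilinZr // (Ftens xa x'a' yb y'b') (Ftens x'a' xa y'b' yb).
rewrite nR nS nux nuy !bilinZr //.
have [->|/(degR x'a' xa)] := eqVneq (FR x' x) 0; first by rewrite !(mulr0, mul0r).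
have [->|/(degS y'b' yb)] := eqVneq (FS y' y) 0; first by rewrite !(mulr0, mul0r).
rewrite (addrC a') (addrC b') => /dual_degree-> /dual_degree->.
rewrite bicharNl // bicharNr // bicharDl // bicharDr //.
by field; rewrite !bichar_neq0.
Qed.

Lemma tens_form_nondegr z : (forall w, F w z = 0) -> z = 0.
Proof.
move=> Fz0; pose u i := \sum_j z i j *: (vbasis {:S})`_j.
suff u0 i : u i = 0 by rewrite [z]tens_decomp big1 // => i _; rewrite -/(u i) u0 tens0r.
case: fS => _ [_ ndS] _; apply: ndS.
apply: (scalar_eq_span sXS) => [c y1 y2|c y1 y2|y' /homXS[b' y'b']] /=.
- exact: bFS.1.
- by rewrite mulr0 addr0.
pose Z := \sum_i FS y' (u i) *: (vbasis {:R})`_i.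
suff Z0 : Z = 0 by move/freeP: (basis_free (vbasisP {:R})) => /(_ _ Z0).
case: fR => _ [_ ndR] _; apply: ndR.
apply: (scalar_eq_span sXR) => [c x1 x2|c x1 x2|x' /homXR[a' x'a']] /=.
- exact: bFR.1.
- by rewrite mulr0 addr0.
have /eqP : t (- (a' + sigR)) b' * FR x' Z = 0.
  rewrite -(Fz0 (tens x' y')) [z]tens_decomp !bilin_sumr // mulr_sumr.
  by apply: eq_bigr => j _; rewrite bilinZr // (tens_form_homogl _ _ x'a' y'b'); ring.
by rewrite mulf_eq0 (negPf (bichar_neq0 bt _ _)) => /eqP.
Qed.

End TwistedTensorForm.

Section NakayamaEigenbasis.
Variables (k : fieldType) (V : vectType k) (F : V -> V -> k) (Y : seq V).
Hypotheses (bF : bilinear_form F) (ndF : forall z, (forall w, F w z = 0) -> z = 0)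
  (fY : free Y) (sY : (<<Y>> = fullv)%VS)
  (eigY : forall v, v \in Y -> exists c : k, forall w, F v w = F w (c *: v)).

Lemma nakayama_exists : exists nu : 'End(V), nakayama F nu.
Proof.
have [c Fc] := seq_choice 0 eigY.
have [f map_fY] := linear_of_free Y [seq c v *: v | v <- Y].
have fc : {in Y, forall v, f v = c v *: v}.
  by apply/eq_in_map; rewrite map_fY ?size_map.
exists (linfun f) => z w; move: z; apply: (scalar_eq_span sY) => [a u v|a u v|v vY].
- exact: bF.1.
- by rewrite /= !lfunE /= linearP bF.2.
by rewrite lfunE /= fc // Fc.
Qed.

Lemma nakayama_diagonalisable nu : nakayama F nu -> diagonalisable nu.
Proof.
move=> nF; exists Y; split; first by rewrite /basis_of sY eqxx.
move=> v /eigY[c Fc]; exists c; apply/eqP; rewrite -subr_eq0; apply/eqP/ndF => w.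
by rewrite bilinBr // -nF Fc subrr.
Qed.

End NakayamaEigenbasis.

Theorem mainTheorem7 (k : fieldType) (A B : zmodType)
  (R S : falgType k) (GR : A -> {vspace R}) (GS : B -> {vspace S})
  (FR : R -> R -> k) (FS : S -> S -> k) (t : A -> B -> k)
  (sigR : A) (sigS : B) (nuR : 'End(R)) (nuS : 'End(S)) :
  graded_alg GR -> graded_alg GS ->
  frobenius_form FR -> frobenius_form FS ->
  bicharacter t ->
  (forall a a' (r r' : R), r \in GR a -> r' \in GR a' ->
     FR r r' != 0 -> a + a' + sigR = 0) ->
  (forall b b' (s s' : S), s \in GS b -> s' \in GS b' ->
     FS s s' != 0 -> b + b' + sigS = 0) ->
  nakayama FR nuR -> diagonalisable nuR ->
  nakayama FS nuS -> diagonalisable nuS ->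
  forall F : tensorT R S -> tensorT R S -> k,
  bilinear_form F ->
  (forall a a' b b' (r r' : R) (s s' : S),
     r \in GR a -> r' \in GR a' -> s \in GS b -> s' \in GS b' ->
     F (tens r s) (tens r' s') = t a' b * FR r r' * FS s s') ->
  (exists nu : 'End(tensorT R S), nakayama F nu) /\
  (forall nu : 'End(tensorT R S), nakayama F nu -> diagonalisable nu).
Proof.
move=> gR gS fR fS bt degR degS nR dR nS dS F bF Ftens.
have [XR sXR eigXR] := homog_eigen_span gR fR degR nR dR.
have [XS sXS eigXS] := homog_eigen_span gS fS degS nS dS.
have homXR x : x \in XR -> exists a, x \in GR a by move=> /eigXR[a [_ [xa _]]]; exists a.
have homXS y : y \in XS -> exists b, y \in GS b by move=> /eigXS[b [_ [yb _]]]; exists b.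
have [Y [sYT fY eYT]] := free_subset_span [seq tens x y | x <- XR, y <- XS].
have sY : (<<Y>> = fullv)%VS by rewrite eYT tens_span.
have eigY v : v \in Y -> exists c, forall w, F v w = F w (c *: v).
  move=> /sYT/allpairsP[[x y] [/eigXR[a [l [xa nux]]] /eigXS[b [m [yb nuy]]] ->]].
  by eexists; apply: (tens_nakayama_eigen fR fS bt degR degS bF Ftens sXR homXR sXS homXS
    nR nS xa nux yb nuy).
have ndF := tens_form_nondegr fR fS bt degR bF Ftens sXR homXR sXS homXS.
split; [exact: nakayama_exists eigY | exact: nakayama_diagonalisable eigY].
Qed.
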